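(* Let $f:\{-1,1\}^k\to\{0,1\}$ and $\delta\in(0,1)$. There exists a vanishing probability measure on $\mathcal{C}_\delta(f)$ if and only if there exists a vanishing probability measure on $\mathcal{C}(f)$.
   Context: $\mathcal{C}(f)$ is the set of symmetric $(k+1)\times(k+1)$ moment matrices $\zeta(\nu)$ (indices $0..k$: $\zeta(i,i)=1$, $\zeta(0,i)=\mathbb{E}_\nu x_i$, $\zeta(i,j)=\mathbb{E}_\nu x_ix_j$ for $i\neq j$) over distributions $\nu$ on $f^{-1}(1)$; $\mathcal{C}_\delta(f)=\{(1-\delta)\zeta+\delta I_{k+1}:\zeta\in\mathcal{C}(f)\}$. For $S\subseteq[k]$, a permutation $\pi$ of $S$, and $b\in\{-1,1\}^{|S|}$, $\zeta_{S,\pi,b}$ is the submatrix of $\zeta$ on rows/columns $\{0\}\cup S$ with the $S$-coordinates permuted by $\pi$, multiplied entrywise by $(1\ b)(1\ b)^T$; for a measure $\Lambda$, $\Lambda_{S,\pi,b}$ is the law of $\zeta_{S,\pi,b}$, $\zeta\sim\Lambda$. With $\hat f(S)$ the Fourier coefficients of $f$, a probability measure $\Lambda$ (on either body) is vanishing if for every $t\in[k]$ the signed measure $\mathbb{E}_{|S|=t}\mathbb{E}_{\pi}\mathbb{E}_{b}[(\prod_{i\in S}b_i)\hat f(S)\Lambda_{S,\pi,b}]$ ($S,\pi,b$ uniform) is identically zero. *)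

From HB Require Import structures.
From mathcomp Require Import all_boot all_order all_algebra.
From mathcomp Require Import fingroup perm.
From mathcomp Require Import all_classical all_reals all_analysis.
Set Implicit Arguments. Unset Strict Implicit. Unset Printing Implicit Defensive.
Import Order.TTheory GRing.Theory Num.Theory.
Local Open Scope classical_set_scope.
Local Open Scope ring_scope.

(* Points of {-1,1}^k are encoded as x : {ffun 'I_k -> bool}; coordinate i
   has sign value [sgnb (x i)], true ↦ 1, false ↦ -1. Coordinate i : 'I_k
   of the paper's [k] corresponds to matrix index (lift ord0 i) : 'I_k.+1,
   and matrix index ord0 is the paper's index 0. *)
Definition sgnb (R : pzRingType) (b : bool) : R := if b then 1 else -1.

Definition cube (k : nat) := {ffun 'I_k -> bool}.

Definition xext (R : pzRingType) (k : nat) (x : cube k) (i : 'I_k.+1) : R :=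
  if unlift ord0 i is Some j then sgnb R (x j) else 1.

Definition distr_on (R : realType) (k : nat) (f : cube k -> bool)
  (nu : cube k -> R) : Prop :=
  (forall x, 0 <= nu x) /\ (\sum_x nu x = 1) /\ (forall x, ~~ f x -> nu x = 0).

Definition moment (R : realType) (k : nat) (nu : cube k -> R) : 'M[R]_k.+1 :=
  \matrix_(i, j) (if i == j then 1
                  else \sum_x nu x * (xext R x i * xext R x j)).

Definition Cbody (R : realType) (k : nat) (f : cube k -> bool)
  : set 'M[R]_k.+1 :=
  [set z | exists nu, distr_on f nu /\ z = moment nu].

Definition Cdelta (R : realType) (k : nat) (f : cube k -> bool) (d : R)
  : set 'M[R]_k.+1 :=
  [set (1 - d) *: z + d *: 1%:M | z in @Cbody R k f].

Definition MT (R : realType) (n : nat) :=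
  g_sigma_algebraType (@open (matrix R^o n n)).

Definition fhat (R : realType) (k : nat) (f : cube k -> bool) (S : {set 'I_k})
  : R :=
  (2 ^+ k)^-1 * \sum_(x : cube k) (if f x then 1 else 0) *
                 \prod_(i in S) sgnb R (x i).

(* zeta_{S,pi,b}: rows/columns {0} ∪ S, S listed in increasing order and
   permuted by pi, entries multiplied by (1 b)(1 b)^T. *)
Definition subidx (k t : nat) (S : {set 'I_k}) (pi : 'S_t) (i : 'I_t.+1)
  : 'I_k.+1 :=
  if unlift ord0 i is Some j
  then nth ord0 [seq lift ord0 s | s <- enum S] (pi j)
  else ord0.

Definition bext (R : pzRingType) (t : nat) (b : {ffun 'I_t -> bool})
  (i : 'I_t.+1) : R :=
  if unlift ord0 i is Some j then sgnb R (b j) else 1.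

Definition subperm (R : realType) (k t : nat) (S : {set 'I_k}) (pi : 'S_t)
  (b : {ffun 'I_t -> bool}) (z : 'M[R]_k.+1) : 'M[R]_t.+1 :=
  \matrix_(i, j) (z (subidx S pi i) (subidx S pi j) * (bext R b i * bext R b j)).

(* Lambda is vanishing: for every t in [k] the signed measure
   E_{|S|=t} E_pi E_b [(prod b_i) fhat(S) Lambda_{S,pi,b}] is zero,
   i.e. vanishes on every Borel set A of (t+1)x(t+1) matrices. *)
Definition vanishing (R : realType) (k : nat) (f : cube k -> bool)
  (L : probability (MT R k.+1) R) : Prop :=
  forall t : nat, (1 <= t <= k)%N ->
  forall A : set (MT R t.+1), measurable A ->
    \sum_(S : {set 'I_k} | #|S| == t)
     \sum_(pi : 'S_t)
      \sum_(b : {ffun 'I_t -> bool})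
        ((('C(k, t) * t`! * 2 ^ t)%:R)^-1 *
         (\prod_(j : 'I_t) sgnb R (b j)) * fhat R f S *
         fine (L (subperm S pi b @^-1` A))) = 0.

From HB Require Import structures.
From mathcomp Require Import all_boot all_order all_algebra.
From mathcomp Require Import fingroup perm.
From mathcomp Require Import all_classical all_reals all_analysis.
Import Order.TTheory GRing.Theory Num.Theory.
Local Open Scope classical_set_scope.
Local Open Scope ring_scope.
Set Implicit Arguments. Unset Strict Implicit.

(* The affine map [z |-> (1 - d) z + d I] carries C(f) onto C_delta(f), is
   invertible for d < 1, and commutes with every restriction
   [zeta |-> zeta_{S,pi,b}] because the latter only permutes indices and
   flips signs symmetrically, so it keeps the unit diagonal. Hence pushing
   a measure forward along this map or its inverse preserves vanishing and
   moves its support between the two bodies. *)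

Lemma image_can_preimage (T U : Type) (g : T -> U) (h : U -> T) (A : set T) :
  cancel g h -> cancel h g -> g @` A = h @^-1` A.
Proof.
move=> gK hK; apply/seteqP; split => [_ [x Ax <-]|y Ahy].
  by rewrite /preimage /= gK.
by exists (h y); rewrite ?hK.
Qed.

Definition mx_affine (R : pzRingType) n (a c : R) (z : 'M[R]_n) : 'M[R]_n :=
  a *: z + c *: 1%:M.

Lemma mx_affine_comp (R : pzRingType) n (a c a' c' : R) (z : 'M[R]_n) :
  mx_affine a' c' (mx_affine a c z) = mx_affine (a' * a) (a' * c + c') z.
Proof. by rewrite /mx_affine scalerDr !scalerA scalerDl addrA. Qed.

Lemma mx_affine1 (R : pzRingType) n (z : 'M[R]_n) : mx_affine 1 0 z = z.
Proof. by rewrite /mx_affine scale1r scale0r addr0. Qed.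

Lemma mx_affineK (R : fieldType) n (a c : R) : a != 0 ->
  cancel (@mx_affine R n a c) (mx_affine a^-1 (- (c / a))).
Proof. by move=> a0 z; rewrite mx_affine_comp mulVf // mulrC subrr mx_affine1. Qed.

Lemma mx_affineVK (R : fieldType) n (a c : R) : a != 0 ->
  cancel (mx_affine a^-1 (- (c / a))) (@mx_affine R n a c).
Proof.
by move=> a0 z; rewrite mx_affine_comp mulfV // mulrN mulrCA mulfV // mulr1 addNr mx_affine1.
Qed.

Lemma continuous_mx_affine (R : numFieldType) n (a c : R) :
  continuous (mx_affine a c : matrix R^o n n -> matrix R^o n n).
Proof.
by move=> z; apply: continuousD; [exact: scaler_continuous | exact: cst_continuous].
Qed.

Lemma measurable_mx_affine (R : realType) n (a c : R) :
  measurable_fun [set: MT R n] (mx_affine a c : MT R n -> MT R n).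
Proof.
apply: measurability; first by [].
move=> _ [B oB <-]; rewrite setTI; apply: sub_gen_smallest.
by apply: open_comp => // z _; exact: continuous_mx_affine.
Qed.

(* A copy of [mx_affine a c] typed on Borel matrices, so that it can carry a
   measurable-function instance. *)
Definition mx_affine_mfun (R : realType) n (a c : R) : MT R n -> MT R n :=
  mx_affine a c.

HB.instance Definition _ (R : realType) n (a c : R) :=
  isMeasurableFun.Build _ _ (MT R n) (MT R n) (mx_affine_mfun a c)
    (measurable_mx_affine a c).

Lemma subidx_inj k t (S : {set 'I_k}) (pi : 'S_t) :
  #|S| = t -> injective (subidx S pi).
Proof.
move=> St; set s := [seq lift ord0 x | x <- enum S].
have s_uniq : uniq s by rewrite map_inj_uniq ?enum_uniq //; exact: lift_inj.
have lt_s (j : 'I_t) : (pi j < size s)%N by rewrite size_map -cardE St.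
have s_neq0 (j : 'I_t) : nth ord0 s (pi j) != ord0.
  apply/eqP => s0; move: (mem_nth ord0 (lt_s j)); rewrite s0.
  by case/mapP => x _ /(congr1 val); rewrite /= /bump leq0n.
move=> i j; rewrite /subidx -/s.
case: (unliftP ord0 i) => [i'|] ->; case: (unliftP ord0 j) => [j'|] -> //.
- by move/eqP; rewrite nth_uniq // => /eqP/val_inj/perm_inj ->.
- by move/eqP; rewrite (negbTE (s_neq0 i')).
- by move/esym/eqP; rewrite (negbTE (s_neq0 j')).
Qed.

Lemma bext_mulss (R : pzRingType) t (b : {ffun 'I_t -> bool}) i :
  bext R b i * bext R b i = 1.
Proof.
rewrite /bext; case: (unlift _ _) => [j|]; last exact: mulr1.
by rewrite /sgnb; case: (b j); rewrite ?mulr1 ?mulN1r ?opprK.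
Qed.

Lemma subperm_mx_affine (R : realType) k t (S : {set 'I_k}) (pi : 'S_t) b
    (a c : R) z :
  #|S| = t -> subperm S pi b (mx_affine a c z) = mx_affine a c (subperm S pi b z).
Proof.
move=> St; apply/matrixP => i j; rewrite /mx_affine !mxE mulrDl -!mulrA.
congr (_ + _ * _).
have [->|ij] := eqVneq i j; first by rewrite !eqxx bext_mulss mulr1.
by rewrite (inj_eq (subidx_inj St)) (negbTE ij) mul0r.
Qed.

Lemma vanishing_mx_affine (R : realType) k (f : cube k -> bool)
    (L : probability (MT R k.+1) R) (a c : R) :
  vanishing f L -> vanishing f (distribution L (mx_affine_mfun a c)).
Proof.
move=> vL t t_k A mA.
have mA' : measurable (mx_affine a c @^-1` A : set (MT R t.+1)).
  by rewrite -[X in measurable X]setTI; exact: measurable_mx_affine.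
apply: etrans (vL t t_k _ mA').
apply: eq_bigr => S /eqP St; apply: eq_bigr => pi _; apply: eq_bigr => b _.
congr (_ * fine (L _)); apply/seteqP; split => z /=;
  by rewrite /mx_affine_mfun subperm_mx_affine.
Qed.

Lemma exists_vanishing_mx_affine (R : realType) k (f : cube k -> bool)
    (a c : R) (A B : set 'M[R]_k.+1) :
  mx_affine a c @^-1` B = A ->
  (exists L : probability (MT R k.+1) R, L (~` A) = 0%E /\ vanishing f L) ->
  (exists L : probability (MT R k.+1) R, L (~` B) = 0%E /\ vanishing f L).
Proof.
move=> BA [L [LA vL]]; exists (distribution L (mx_affine_mfun a c)).
split; last exact: vanishing_mx_affine.
by rewrite -LA -BA preimage_setC.
Qed.

Theorem mainTheorem6 (R : realType) (k : nat) (f : cube k -> bool) (d : R) :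
  0 < d < 1 ->
  ((exists L : probability (MT R k.+1) R,
       L (~` Cdelta f d) = 0%E /\ vanishing f L) <->
   (exists L : probability (MT R k.+1) R,
       L (~` @Cbody R k f) = 0%E /\ vanishing f L)).
Proof.
case/andP => _ d_lt1.
have a0 : 1 - d != 0 by rewrite subr_eq0 gt_eqF.
have Cd : Cdelta f d = mx_affine (1 - d) d @` Cbody f by [].
split.
- apply: (@exists_vanishing_mx_affine _ _ _ (1 - d)^-1 (- (d / (1 - d)))).
  by rewrite Cd (image_can_preimage _ (mx_affineK d a0) (mx_affineVK d a0)).
- apply: (@exists_vanishing_mx_affine _ _ _ (1 - d) d).
  rewrite Cd; apply/seteqP; split => z /=; last by exists z.
  by case=> x Cx /(can_inj (mx_affineK d a0)) <-.
Qed.
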